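(* Let $k\ge1$ and $\gamma_1,\dots,\gamma_k\in\mathbb{R}$, and define $f:\mathbb{R}\to\mathbb{R}$ by $f(\omega)=\frac1k\sum_{j=1}^k\cos(\omega\gamma_j)$. Then for every $\alpha>0$, $\sup_{\omega\in[\alpha,100\alpha]}f(\omega)\ge-\frac15$. *)

From Stdlib Require Import Reals.
Open Scope R_scope.

(* f(w) = (1/k) * sum_{j=1}^k cos(w * gamma_j); gamma indexed 0..k-1 here. *)
Definition favg (k : nat) (gamma : nat -> R) (w : R) : R :=
  (/ INR k) * sum_f_R0 (fun j => cos (w * gamma j)) (k - 1).

Definition favg_image (k : nat) (gamma : nat -> R) (alpha : R) : R -> Prop :=
  fun y => exists w, alpha <= w <= 100 * alpha /\ y = favg k gamma w.

From Stdlib Require Import Reals Lra Lia.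
Open Scope R_scope.

(* With [C_n x = sum_(d=0)^n cos (d x)], the Fejér sum [sum_(n=0)^N C_n x] equals
   [(N + 1 + |sum_(d=0)^N e^(i d x)|^2) / 2], hence is at least [(N+1)/2].  Averaging this
   over [x = alpha gamma_j] gives [sum_(n=0)^N sum_(d=0)^n f(d alpha) >= (N+1)/2], while
   [f 0 = 1] and [f(d alpha) <= s] for [1 <= d <= N] bound the same double sum by
   [(N+1) + s N (N+1)/2]; thus [s >= -1/N].  Take [N = 5]: [d alpha] lies in [[alpha, 100 alpha]]. *)

Definition cos_sum (x : R) (n : nat) : R := sum_f_R0 (fun d => cos (INR d * x)) n.
Definition sin_sum (x : R) (n : nat) : R := sum_f_R0 (fun d => sin (INR d * x)) n.

Lemma cos_sum_S (x : R) (n : nat) :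
  cos_sum x (S n) = 1 + cos x * cos_sum x n - sin x * sin_sum x n.
Proof.
  induction n as [|n IH].
  - unfold cos_sum, sin_sum; simpl; rewrite Rmult_0_l, Rmult_1_l, cos_0, sin_0; ring.
  - change (cos_sum x (S (S n))) with (cos_sum x (S n) + cos (INR (S (S n)) * x)).
    rewrite IH at 1.
    change (cos_sum x (S n)) with (cos_sum x n + cos (INR (S n) * x)).
    change (sin_sum x (S n)) with (sin_sum x n + sin (INR (S n) * x)).
    rewrite (S_INR (S n)), Rmult_plus_distr_r, Rmult_1_l, Rplus_comm, cos_plus.
    ring.
Qed.

Lemma sin_sum_S (x : R) (n : nat) :
  sin_sum x (S n) = sin x * cos_sum x n + cos x * sin_sum x n.
Proof.
  induction n as [|n IH].
  - unfold cos_sum, sin_sum; simpl; rewrite Rmult_0_l, Rmult_1_l, cos_0, sin_0; ring.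
  - change (sin_sum x (S (S n))) with (sin_sum x (S n) + sin (INR (S (S n)) * x)).
    rewrite IH at 1.
    change (cos_sum x (S n)) with (cos_sum x n + cos (INR (S n) * x)).
    change (sin_sum x (S n)) with (sin_sum x n + sin (INR (S n) * x)).
    rewrite (S_INR (S n)), Rmult_plus_distr_r, Rmult_1_l, Rplus_comm, sin_plus.
    ring.
Qed.

Lemma cos_sum_sqr_add_sin_sum_sqr (x : R) (n : nat) :
  cos_sum x n ^ 2 + sin_sum x n ^ 2 = 2 * sum_f_R0 (cos_sum x) n - INR (S n).
Proof.
  induction n as [|n IH].
  - unfold cos_sum, sin_sum; simpl; rewrite Rmult_0_l, cos_0, sin_0; ring.
  - change (sum_f_R0 (cos_sum x) (S n)) with (sum_f_R0 (cos_sum x) n + cos_sum x (S n)).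
    (* [(C_(n+1) - 1, S_(n+1))] is [(C_n, S_n)] rotated by [x]. *)
    rewrite (S_INR (S n)), !cos_sum_S, sin_sum_S.
    pose proof (sin2_cos2 x) as Hpyth; unfold Rsqr in Hpyth.
    nra.
Qed.

Lemma fejer_sum_lower_bound (x : R) (n : nat) : INR (S n) / 2 <= sum_f_R0 (cos_sum x) n.
Proof.
  pose proof (cos_sum_sqr_add_sin_sum_sqr x n).
  pose proof (pow2_ge_0 (cos_sum x n)); pose proof (pow2_ge_0 (sin_sum x n)).
  lra.
Qed.

Lemma sum_f_R0_comm (a : nat -> nat -> R) (N M : nat) :
  sum_f_R0 (fun n => sum_f_R0 (a n) M) N = sum_f_R0 (fun j => sum_f_R0 (fun n => a n j) N) M.
Proof.
  induction N as [|N IH]; simpl; [reflexivity|].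
  rewrite IH, <- plus_sum; reflexivity.
Qed.

Definition avg (k : nat) (h : nat -> R) : R := / INR k * sum_f_R0 h (k - 1).

Lemma sum_avg (k : nat) (h : nat -> nat -> R) (N : nat) :
  sum_f_R0 (fun n => avg k (h n)) N = avg k (fun j => sum_f_R0 (fun n => h n j) N).
Proof.
  unfold avg; rewrite <- sum_f_R0_comm, scal_sum.
  apply sum_eq; intros; apply Rmult_comm.
Qed.

Lemma avg_ge (k : nat) (h : nat -> R) (c : R) :
  (1 <= k)%nat -> (forall j, (j <= k - 1)%nat -> c <= h j) -> c <= avg k h.
Proof.
  intros Hk Hh; unfold avg.
  assert (Hpos : 0 < INR k) by (apply lt_0_INR; lia).
  assert (Hsum : c * INR k <= sum_f_R0 h (k - 1)).
  { replace (INR k) with (INR (S (k - 1))) by (f_equal; lia).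
    rewrite <- sum_cte; apply sum_Rle; exact Hh. }
  apply Rmult_le_reg_l with (INR k); [exact Hpos|].
  rewrite <- Rmult_assoc, Rinv_r, Rmult_1_l by lra; lra.
Qed.

Lemma avg_const (k : nat) (c : R) : (1 <= k)%nat -> avg k (fun _ => c) = c.
Proof.
  intros Hk; unfold avg; rewrite sum_cte.
  replace (INR (S (k - 1))) with (INR k) by (f_equal; lia).
  field; apply not_0_INR; lia.
Qed.

Lemma favg_avg (k : nat) (gamma : nat -> R) (w : R) :
  favg k gamma w = avg k (fun j => cos (w * gamma j)).
Proof. reflexivity. Qed.

Lemma favg_0 (k : nat) (gamma : nat -> R) : (1 <= k)%nat -> favg k gamma 0 = 1.
Proof.
  intros Hk; rewrite favg_avg, <- (avg_const k 1 Hk).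
  unfold avg; f_equal; apply sum_eq; intros.
  rewrite Rmult_0_l; apply cos_0.
Qed.

Lemma favg_fejer_sum (k : nat) (gamma : nat -> R) (alpha : R) (N : nat) :
  (1 <= k)%nat ->
  INR (S N) / 2 <= sum_f_R0 (fun n => sum_f_R0 (fun d => favg k gamma (INR d * alpha)) n) N.
Proof.
  intros Hk.
  rewrite (sum_eq _ (fun n => avg k (fun j => sum_f_R0 (fun d => cos (INR d * alpha * gamma j)) n)))
    by (intros; apply sum_avg).
  rewrite sum_avg; apply avg_ge; [exact Hk|]; intros j _.
  replace (sum_f_R0 _ N) with (sum_f_R0 (cos_sum (alpha * gamma j)) N)
    by (apply sum_eq; intros; apply sum_eq; intros; rewrite Rmult_assoc; reflexivity).
  apply fejer_sum_lower_bound.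
Qed.

Lemma sum_le_head_add (A : nat -> R) (s : R) (n : nat) :
  (forall d, (1 <= d <= n)%nat -> A d <= s) -> sum_f_R0 A n <= A 0%nat + INR n * s.
Proof.
  induction n as [|n IH]; intros HA; simpl sum_f_R0.
  - simpl; lra.
  - assert (A (S n) <= s) by (apply HA; lia).
    assert (sum_f_R0 A n <= A 0%nat + INR n * s) by (apply IH; intros; apply HA; lia).
    rewrite S_INR; lra.
Qed.

Lemma sum_partial_sums_le (A : nat -> R) (s : R) (N : nat) :
  (forall d, (1 <= d <= N)%nat -> A d <= s) ->
  sum_f_R0 (fun n => sum_f_R0 A n) N <= INR (S N) * A 0%nat + s * (INR N * INR (S N) / 2).
Proof.
  induction N as [|N IH]; intros HA.
  - simpl; lra.
  - change (sum_f_R0 (fun n => sum_f_R0 A n) (S N))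
      with (sum_f_R0 (fun n => sum_f_R0 A n) N + sum_f_R0 A (S N)).
    eapply Rle_trans.
    { apply Rplus_le_compat.
      - apply IH; intros; apply HA; lia.
      - apply sum_le_head_add; exact HA. }
    right; rewrite !S_INR; field.
Qed.

Lemma favg_multiples_bound (k : nat) (gamma : nat -> R) (alpha s : R) (N : nat) :
  (1 <= k)%nat -> (1 <= N)%nat ->
  (forall d, (1 <= d <= N)%nat -> favg k gamma (INR d * alpha) <= s) -> - / INR N <= s.
Proof.
  intros Hk HN Hs.
  pose proof (favg_fejer_sum k gamma alpha N Hk) as Hlow.
  pose proof (sum_partial_sums_le (fun d => favg k gamma (INR d * alpha)) s N Hs) as Hup.
  cbn beta in Hup; rewrite Rmult_0_l, favg_0 in Hup by exact Hk.
  assert (HNpos : 0 < INR N) by (apply lt_0_INR; lia).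
  rewrite S_INR in Hlow, Hup.
  assert (Hprod : 0 <= INR N * s + 1) by nra.
  apply Rmult_le_reg_l with (INR N); [exact HNpos|].
  rewrite Ropp_mult_distr_r_reverse, Rinv_r by lra; lra.
Qed.

Theorem mainTheorem3 (k : nat) (gamma : nat -> R) (alpha : R) :
  (1 <= k)%nat -> 0 < alpha ->
  forall s : R, is_lub (favg_image k gamma alpha) s -> - (1 / 5) <= s.
Proof.
  intros Hk Halpha s [Hub _].
  replace (- (1 / 5)) with (- / INR 5) by (simpl; field).
  apply (favg_multiples_bound k gamma alpha s 5 Hk); [lia|].
  intros d Hd; apply Hub; exists (INR d * alpha); split; [|reflexivity].
  assert (Hd' : INR 1 <= INR d <= INR 5) by (split; apply le_INR; lia).
  simpl in Hd'; nra.
Qed.
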